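(* Let $d\geq 1$ and $s\geq 2$ be integers, let $A:=\{\sqrt{2i}\colon i\in\{1,\dots,s\}\}$, and let $\mathcal{W}:=\{(w_1,\dots,w_d)^T\in\mathbb{R}^d\colon w_i\in A \text{ for all } i\in\{1,\dots,d\}\}$. For $w=(w_1,\dots,w_d)^T\in\mathcal{W}$ let $\mathcal{V}_w$ be the set of real solution vectors $v=(v_1,\dots,v_d)^T\in\mathbb{R}^d$ of the system of $d$ equations \[ \sum_{i=1}^d\left(\frac{w_1^2-w_i^2}{2}+v_1\right)^2=w_1^2+2v_1-1,\qquad v_j=\frac{w_1^2-w_j^2}{2}+v_1\quad (j\in\{2,\dots,d\}). \] Let $\Gamma$ be the graph whose vertex set is $\bigcup_{w\in\mathcal{W}}\mathcal{V}_w$, in which two distinct vertices $x,y$ are adjacent if and only if $\mu(x,y)\in A$, and let $\omega(\Gamma)$ be the size of a maximum clique of $\Gamma$. Then for some subset $A'\subseteq A$ there exists a set $\mathcal{X}\subset\mathbb{R}^d$ with $d+\omega(\Gamma)$ elements which is an $|A'|$-distance set with $A(\mathcal{X})=A'$.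
   Context: $\mu(x,y)$ denotes the Euclidean distance in $\mathbb{R}^d$. For a finite set $\mathcal{X}$ of distinct vectors in $\mathbb{R}^d$, $A(\mathcal{X})$ denotes the set of distances $\mu(x,y)$ between distinct elements $x,y\in\mathcal{X}$; $\mathcal{X}$ is called an $s$-distance set if $|A(\mathcal{X})|=s$. A clique of a graph is a set of pairwise adjacent vertices. *)

From HB Require Import structures.
From mathcomp Require Import all_boot all_order all_algebra.
From mathcomp Require Import reals.
Set Implicit Arguments. Unset Strict Implicit. Unset Printing Implicit Defensive.
Import Order.TTheory GRing.Theory Num.Theory.
Local Open Scope ring_scope.

Definition mu (R : realType) (d : nat) (x y : 'rV[R]_d) : R :=
  Num.sqrt (\sum_(i < d) (x 0 i - y 0 i) ^+ 2).

Definition Aset (R : realType) (s : nat) (a : R) : Prop :=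
  exists i : nat, (1 <= i <= s)%N /\ a = Num.sqrt (2 * i%:R).

Definition Wset (R : realType) (d s : nat) (w : 'rV[R]_d) : Prop :=
  forall i : 'I_d, Aset s (w 0 i).

(* V_w : solutions of the system; index i0 with val i0 = 0 is the first
   coordinate (w_1, v_1). *)
Definition Vset (R : realType) (d : nat) (w v : 'rV[R]_d) : Prop :=
  forall i0 : 'I_d, nat_of_ord i0 = 0%N ->
    (\sum_(i < d) ((w 0 i0 ^+ 2 - w 0 i ^+ 2) / 2 + v 0 i0) ^+ 2
       = w 0 i0 ^+ 2 + 2 * v 0 i0 - 1)
    /\ (forall j : 'I_d, (1 <= nat_of_ord j)%N ->
          v 0 j = (w 0 i0 ^+ 2 - w 0 j ^+ 2) / 2 + v 0 i0).

Definition vertex (R : realType) (d s : nat) (v : 'rV[R]_d) : Prop :=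
  exists w, Wset s w /\ Vset w v.

Definition adj (R : realType) (d s : nat) (x y : 'rV[R]_d) : Prop :=
  Aset s (mu x y).

Definition clique (R : realType) (d s : nat) (C : seq 'rV[R]_d) : Prop :=
  uniq C /\ (forall x, x \in C -> vertex s x) /\
  (forall x y, x \in C -> y \in C -> x != y -> adj s x y).

Definition clique_number (R : realType) (d s : nat) (k : nat) : Prop :=
  (exists C : seq 'rV[R]_d, clique s C /\ size C = k) /\
  (forall C : seq 'rV[R]_d, clique s C -> (size C <= k)%N).

Definition dist_set (R : realType) (d : nat) (X : seq 'rV[R]_d) (a : R) : Prop :=
  exists x y, x \in X /\ y \in X /\ x != y /\ a = mu x y.

From HB Require Import structures.
From mathcomp Require Import all_boot all_order all_algebra.
From mathcomp Require Import reals.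
From mathcomp Require Import ring.
Set Implicit Arguments. Unset Strict Implicit.
Import Order.TTheory GRing.Theory Num.Theory.
Local Open Scope ring_scope.

(* The set X consists of the d standard unit vectors together with a maximum
   clique C of Gamma.  Two unit vectors are at distance sqrt 2 in A; clique
   vertices are pairwise at distances in A by definition; and for v in V_w,
   |v - e_j|^2 = |v|^2 - 2 v_j + 1 = w_j^2 by the defining system, so
   v is at distance w_j in A from e_j; in particular v is no unit vector, so
   |X| = d + omega.  Taking A' := A(X) does the rest. *)

Section Distances.
Variables (R : realType) (d : nat).
Implicit Types (x v w : 'rV[R]_d) (i j k : 'I_d).

Lemma mu_sym x y : mu x y = mu y x.
Proof. by rewrite /mu; congr Num.sqrt; apply: eq_bigr => i _; rewrite -sqrrN opprB. Qed.

Lemma mu_xx x : mu x x = 0.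
Proof. by rewrite /mu big1 ?sqrtr0 // => k _; rewrite subrr expr0n. Qed.

Lemma sum_sqr_sub_unit x j :
  \sum_k (x 0 k - ('e_j : 'rV[R]_d) 0 k) ^+ 2 = \sum_k x 0 k ^+ 2 - 2 * x 0 j + 1.
Proof.
rewrite (bigD1 j) //= [in RHS](bigD1 j) //= !mxE !eqxx /=.
rewrite (eq_bigr (fun k => x 0 k ^+ 2)); first ring.
by move=> k /negbTE jNk; rewrite !mxE jNk subr0.
Qed.

Lemma mu_unit_neq i j : i != j -> mu 'e_i ('e_j : 'rV[R]_d) = Num.sqrt 2.
Proof.
move=> iNj; rewrite /mu sum_sqr_sub_unit (bigD1 i) //= big1.
  by rewrite !mxE !eqxx eq_sym (negbTE iNj) /=; congr Num.sqrt; ring.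
by move=> k /negbTE kNi; rewrite !mxE kNi expr0n.
Qed.

Lemma unit_inj : injective (fun j => 'e_j : 'rV[R]_d).
Proof.
move=> i j /(congr1 (fun x : 'rV[R]_d => x 0 i)) /=; rewrite !mxE !eqxx /=.
by case: eqP => // _ /eqP; rewrite oner_eq0.
Qed.

Section Solutions.
Variables (w v : 'rV[R]_d) (i0 : 'I_d).
Hypotheses (i0_first : nat_of_ord i0 = 0%N) (Vwv : Vset w v).

Lemma Vset_coord k : v 0 k = (w 0 i0 ^+ 2 - w 0 k ^+ 2) / 2 + v 0 i0.
Proof.
have [_ coord] := Vwv i0_first.
have [k_eq0 | k_gt0] := posnP k; last exact: coord.
have -> : k = i0 by apply: val_inj; rewrite /= k_eq0 i0_first.
by rewrite subrr mul0r add0r.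
Qed.

Lemma Vset_sum_sqr : \sum_k v 0 k ^+ 2 = w 0 i0 ^+ 2 + 2 * v 0 i0 - 1.
Proof.
have [<- _] := Vwv i0_first.
by apply: eq_bigr => k _; rewrite Vset_coord.
Qed.

End Solutions.

Lemma Vset_mu_unit w v j : Vset w v -> mu v 'e_j = `|w 0 j|.
Proof.
move=> Vwv; pose i0 : 'I_d := Ordinal (leq_ltn_trans (leq0n j) (ltn_ord j)).
rewrite /mu sum_sqr_sub_unit (Vset_sum_sqr (i0 := i0) erefl Vwv).
rewrite (Vset_coord (i0 := i0) erefl Vwv j).
by rewrite -sqrtr_sqr; congr Num.sqrt; field.
Qed.

End Distances.

Section Clique.
Variables (R : realType) (d s : nat).

Lemma Aset_gt0 (a : R) : Aset s a -> 0 < a.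
Proof. by case=> i [/andP [i_gt0 _] ->]; rewrite sqrtr_gt0 mulr_gt0 ?ltr0n. Qed.

Lemma Aset_sqrt2 : (1 <= s)%N -> Aset s (Num.sqrt 2 : R).
Proof. by exists 1%N; rewrite mulr1. Qed.

Lemma vertex_mu_unit (v : 'rV[R]_d) j : vertex s v -> Aset s (mu v 'e_j).
Proof.
case=> w [Ww Vwv]; rewrite (Vset_mu_unit j Vwv) ger0_norm //.
by case: (Ww j) => i [_ ->]; rewrite sqrtr_ge0.
Qed.

Definition units_cat (C : seq 'rV[R]_d) := [seq 'e_j | j <- enum 'I_d] ++ C.

Variable C : seq 'rV[R]_d.
Hypothesis cliqueC : clique s C.

Lemma units_cat_uniq : uniq (units_cat C).
Proof.
have [uniqC [vertexC _]] := cliqueC.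
rewrite cat_uniq uniqC andbT map_inj_uniq ?enum_uniq //=; last exact: unit_inj.
apply/hasPn => x /vertexC /vertex_mu_unit vx; apply/mapP => -[j _ xE].
by have := Aset_gt0 (vx j); rewrite xE mu_xx ltxx.
Qed.

Lemma units_cat_dist : (1 <= s)%N -> forall a, dist_set (units_cat C) a -> Aset s a.
Proof.
have [_ [vertexC adjC]] := cliqueC.
move=> s_gt0 a [x [y [+ [+ [+ ->]]]]]; rewrite !mem_cat.
case/orP => [/mapP [i _ ->] | Cx]; case/orP => [/mapP [j _ ->] | Cy] xNy.
- rewrite mu_unit_neq; first exact: Aset_sqrt2.
  by apply: contra_neq xNy => ->.
- by rewrite mu_sym; apply/vertex_mu_unit/vertexC.
- exact/vertex_mu_unit/vertexC.
- exact: adjC.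
Qed.

End Clique.

Theorem theorem2p1 (R : realType) (d s : nat) (hd : (1 <= d)%N) (hs : (2 <= s)%N)
    (omega : nat) (homega : @clique_number R d s omega) :
  exists A' : R -> Prop,
    (forall a, A' a -> @Aset R s a) /\
    exists X : seq 'rV[R]_d,
      uniq X /\ size X = (d + omega)%N /\
      (forall a, @dist_set R d X a <-> A' a).
Proof.
have [[C [cliqueC sizeC]] _] := homega.
exists (dist_set (units_cat C)); split.
  exact: units_cat_dist cliqueC (ltnW hs).
exists (units_cat C); split; first exact: units_cat_uniq cliqueC.
by split=> //; rewrite size_cat size_map size_enum_ord sizeC.
Qed.
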